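(* If $G$ is a finite directed acyclic graph with at least one edge, then \[\tilde{\chi}(\mathrm{DT}(G))=-\prod_{v\in V(G)\setminus R}(1-d^-(v)),\] where $R$ is the set of vertices of $G$ without edges directed to them.
   Context: A directed acyclic graph has no directed cycles. A directed forest is a set of edges which, as a graph, is acyclic with at most one edge directed to each vertex. $\mathrm{DT}(G)$ is the simplicial complex with vertex set $E(G)$ whose simplices are the directed forests. $d^-(v)$ denotes the number of edges of $G$ directed to $v$, and $\tilde\chi$ is the reduced Euler characteristic. *)

From mathcomp Require Import all_boot all_order all_algebra.
From mathcomp Require Import boolp.
Set Implicit Arguments. Unset Strict Implicit. Unset Printing Implicit Defensive.
Import GRing.Theory Num.Theory.

Section DiGraph.
Variables (V E : finType) (src tgt : E -> V).

Definition closed_walk (s : seq E) : bool :=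
  match s with
  | [::] => false
  | e :: s' => path (fun a b => tgt a == src b) e s' && (tgt (last e s') == src e)
  end.

Definition acyclic_on (F : {set E}) : Prop :=
  forall s : seq E, all (fun e => e \in F) s -> ~~ closed_walk s.

Definition acyclic : Prop := acyclic_on [set: E].

Definition indeg (v : V) : nat := #|[set e : E | tgt e == v]|.

Definition directed_forest (F : {set E}) : Prop :=
  acyclic_on F /\ forall v : V, #|[set e in F | tgt e == v]| <= 1.

End DiGraph.

(* Reduced Euler characteristic of a simplicial complex on vertex set E,
   given by its set of faces (including the empty face):
   sum over faces s of (-1)^(dim s) = (-1)^(|s|-1). *)
Definition reduced_euler (E : finType) (faces : {set E} -> Prop) : int :=
  (- \sum_(F : {set E} | `[< faces F >]) (-1) ^+ #|F|)%R.

(* In an acyclic graph every edge set is acyclic, so the directed forests are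
   exactly the edge sets with at most one edge into each vertex.  Such a set
   is the same as an independent choice, at every vertex v, of either no edge
   or one of the d^-(v) edges into v; hence the signed count of these sets
   factors as the product over v of (1 - d^-(v)), and the factors with
   d^-(v) = 0 are 1. *)
From mathcomp Require Import all_boot all_order all_algebra.
From mathcomp Require Import boolp.
Import GRing.Theory Num.Theory.
Local Open Scope ring_scope.
Set Implicit Arguments. Unset Strict Implicit.

Lemma acyclic_onS (V E : finType) (src tgt : E -> V) (F G : {set E}) :
  G \subset F -> acyclic_on src tgt F -> acyclic_on src tgt G.
Proof.
move=> sGF acF s /allP sG; apply: acF; apply/allP => e /sG.
exact: (subsetP sGF).
Qed.

Section InDegreeAtMostOne.
Variables (V E : finType) (tgt : E -> V).

Definition indeg_le1 (F : {set E}) : bool :=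
  [forall v, #|[set e in F | tgt e == v]| <= 1]%N.

Lemma indeg_le1P (F : {set E}) :
  reflect (forall v, #|[set e in F | tgt e == v]| <= 1)%N (indeg_le1 F).
Proof. exact: forallP. Qed.

Lemma indeg_le1_inj F e e' :
  indeg_le1 F -> e \in F -> e' \in F -> tgt e = tgt e' -> e = e'.
Proof.
move=> /indeg_le1P /(_ (tgt e)) le1 eF e'F tee'; apply/eqP.
apply: contraLR le1 => neq; rewrite -ltnNge; apply/card_gt1P.
by exists e, e'; rewrite !inE eF e'F tee' eqxx.
Qed.

Definition opt_in_edge (v : V) (o : option E) : bool :=
  if o is Some e then tgt e == v else true.

Definition opt_sign (o : option E) : int := if o is Some _ then -1 else 1.

Lemma sum_opt_in_edge v :
  \sum_(o | opt_in_edge v o) opt_sign o = 1 - (indeg tgt v)%:Z.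
Proof.
rewrite (bigD1 None) //= (reindex_omap Some id) => [|[]//].
rewrite (eq_bigl (fun e => tgt e == v)) => [|e]; last by rewrite /= !eqxx !andbT.
by rewrite sumr_const /indeg cardsE mulNrn -[1 *+ _]/(_%:R) natz.
Qed.

Definition chosen_edges (f : {ffun V -> option E}) : {set E} :=
  [set e | f (tgt e) == Some e].

Definition choose_in_edges (F : {set E}) : {ffun V -> option E} :=
  [ffun v => [pick e in F | tgt e == v]].

Lemma choose_in_edgesK F : indeg_le1 F -> chosen_edges (choose_in_edges F) = F.
Proof.
move=> le1F; apply/setP => e; rewrite inE ffunE.
case: pickP => [e' /andP[e'F /eqP te'] | noF].
  apply/eqP/idP => [[<-] // | eF]; congr Some.
  exact: indeg_le1_inj le1F e'F eF te'.
by move: (noF e); rewrite eqxx andbT => ->.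
Qed.

Lemma family_opt_in_edgeE f : (f \in family opt_in_edge) =
  indeg_le1 (chosen_edges f) && (choose_in_edges (chosen_edges f) == f).
Proof.
apply/idP/andP => [/familyP f_in | [_ /eqP <-]]; last first.
  by apply/familyP => v; rewrite ffunE; case: pickP => [e /andP[]|].
split.
  apply/indeg_le1P => v; rewrite leqNgt; apply/card_gt1P => -[x [y []]].
  rewrite !inE => /andP[/eqP fx /eqP <-] /andP[/eqP fy /eqP ty].
  by move: fy; rewrite ty fx => -[->]; rewrite eqxx.
apply/eqP/ffunP => v; rewrite ffunE.
case: pickP => [e /andP[] | none]; first by rewrite inE => /eqP <- /eqP ->.
move: (f_in v); rewrite unfold_in; case fv: (f v) => [e|] //= /eqP te.
by move: (none e); rewrite inE te fv !eqxx.
Qed.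

Lemma prod_opt_sign f : f \in family opt_in_edge ->
  \prod_v opt_sign (f v) = (-1) ^+ #|chosen_edges f|.
Proof.
move=> /familyP f_in.
rewrite (bigID (fun v => f v != None)) /= [X in _ * X]big1 => [|v]; last first.
  by rewrite negbK => /eqP ->.
rewrite mulr1 (eq_bigr (fun=> -1)) => [|v]; last by case: (f v).
rewrite prodr_const; congr (_ ^+ _).
rewrite -(card_in_imset (f := tgt)) => [|x y]; last first.
  by rewrite !inE => /eqP fx /eqP fy txy; move: fx; rewrite txy fy => -[].
apply: eq_card => v; apply/idP/imsetP => [|[e]]; last first.
  by rewrite inE => /eqP fe ->; rewrite unfold_in /= fe.
move: (f_in v); rewrite !unfold_in; case fv: (f v) => [e|] //= /eqP te _.
by exists e; rewrite // inE te fv.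
Qed.

Lemma sum_sign_indeg_le1 :
  \sum_(F | indeg_le1 F) (-1) ^+ #|F| = \prod_v (1 - (indeg tgt v)%:Z) :> int.
Proof.
rewrite (reindex_onto chosen_edges choose_in_edges) => [|F]; last first.
  exact: choose_in_edgesK.
under [RHS]eq_bigr do rewrite -sum_opt_in_edge.
rewrite bigA_distr_big_dep; apply: eq_big => [f | f f_in].
  by rewrite family_opt_in_edgeE.
by rewrite prod_opt_sign // family_opt_in_edgeE.
Qed.

End InDegreeAtMostOne.

Lemma acyclic_directed_forestP (V E : finType) (src tgt : E -> V) F :
  acyclic src tgt -> directed_forest src tgt F <-> indeg_le1 tgt F.
Proof.
move=> acG; split => [[_ /indeg_le1P] // | /indeg_le1P le1F].
by split=> //; apply: acyclic_onS acG; apply: subsetT.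
Qed.

Theorem lemma2p11 (V E : finType) (src tgt : E -> V) :
  acyclic src tgt -> (0 < #|E|)%N ->
  reduced_euler (directed_forest src tgt) =
  - \prod_(v : V | indeg tgt v != 0%N) (1 - (indeg tgt v)%:Z).
Proof.
move=> acG _; rewrite /reduced_euler; congr (- _).
rewrite (eq_bigl (indeg_le1 tgt)) => [|F]; last first.
  exact: asbool_equiv_eqP idP (acyclic_directed_forestP F acG).
rewrite sum_sign_indeg_le1 [RHS]big_mkcond /=.
by apply: eq_bigr => v _; case: eqP => // ->; rewrite subr0.
Qed.
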